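(* The labelled rule (C), with premise $\Gamma, \mathbf{k}\leq \Diamond^{b}\mathbf{j} \vdash \Diamond \mathbf{k}\leq \mathbf{m}, \Delta$ and conclusion $\Gamma, \mathbf{h}\leq \Diamond\mathbf{j} \vdash \Diamond^{b}\mathbf{h}\leq \mathbf{m}, \Delta$ (where $\mathbf{k}$ does not occur in $\Gamma,\Delta$), is sound on the canonical extension $\mathbb{A}^\delta$ of any $\mathcal{L}$-algebra $\mathbb{A}$ such that $\mathbb{A}\models \Diamond\Box p\leq\Box\Diamond p$.
   Context: An $\mathcal{L}$-algebra is a bounded lattice with a finitely join-preserving $\Diamond$ and finitely meet-preserving $\Box$; its canonical extension $\mathbb{A}^\delta=(L^\delta,\Box^\pi,\Diamond^\sigma)$ is complete, with $\Diamond^\sigma$ having a right adjoint $\blacksquare$ and $\Box^\pi$ having a left adjoint denoted $\Diamond^{b}$ ($\Diamond^{b}u\leq v$ iff $u\leq\Box v$). Nominals range over a completely join-generating subset and conominals over a completely meet-generating subset of $\mathbb{A}^\delta$. A sequent $\Gamma\vdash\Delta$ of inequalities (labelled formulas such as $\mathbf{j}\leq A$, $A\leq\mathbf{m}$ and pure structures such as $\mathbf{j}\leq\mathbf{T}$, $\mathbf{T}\leq\mathbf{m}$) is interpreted as: every assignment of proposition variables, nominals and conominals satisfying all inequalities in $\Gamma$ satisfies some inequality in $\Delta$. Soundness uses that the axiom (C) is canonical (hence valid on $\mathbb{A}^\delta$) and that on $\mathbb{A}^\delta$ it is equivalent to $\forall\mathbf{j}\forall\mathbf{m}(\Diamond\Diamond^{b}\mathbf{j}\leq\mathbf{m}\Rightarrow\Diamond^{b}\Diamond\mathbf{j}\leq\mathbf{m})$.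 *)

From HB Require Import structures.
From Stdlib Require Import List.
From mathcomp Require Import all_boot all_order.
Set Implicit Arguments. Unset Strict Implicit. Unset Printing Implicit Defensive.
Import Order.Theory.
Local Open Scope order_scope.

Section Bounds.
Context {d : Order.disp_t} {T : porderType d}.
Definition is_ub (S : T -> Prop) (x : T) := forall y, S y -> y <= x.
Definition is_lb (S : T -> Prop) (x : T) := forall y, S y -> x <= y.
Definition is_lub (S : T -> Prop) (x : T) := is_ub S x /\ forall z, is_ub S z -> x <= z.
Definition is_glb (S : T -> Prop) (x : T) := is_lb S x /\ forall z, is_lb S z -> z <= x.
End Bounds.

Definition complete_lattice {d} (T : porderType d) :=
  forall S : T -> Prop, exists x, is_lub S x.

Definition is_L_algebra {d} {A : tbLatticeType d} (dia box : A -> A) :=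
  [/\ dia \bot = \bot, (forall a b, dia (a `|` b) = dia a `|` dia b),
      box \top = \top & (forall a b, box (a `&` b) = box a `&` box b)].

Section CanExt.
Context {dA : Order.disp_t} {A : tbLatticeType dA}
        {dC : Order.disp_t} {C : tbLatticeType dC} (e : A -> C).

Definition img (S : A -> Prop) : C -> Prop := fun x => exists a, S a /\ x = e a.

Definition lattice_embedding :=
  [/\ injective e, e \bot = \bot, e \top = \top,
      (forall a b, e (a `&` b) = e a `&` e b) & (forall a b, e (a `|` b) = e a `|` e b)].

Definition closed_el (k : C) := exists S : A -> Prop, is_glb (img S) k.
Definition open_el (o : C) := exists S : A -> Prop, is_lub (img S) o.

Definition dense :=
  forall u : C, is_lub (fun k => closed_el k /\ k <= u) u /\
                is_glb (fun o => open_el o /\ u <= o) u.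

Definition compact :=
  forall (S T : A -> Prop) (x y : C), is_glb (img S) x -> is_lub (img T) y -> x <= y ->
  exists (s t : seq A), (forall a, a \in s -> S a) /\ (forall b, b \in t -> T b) /\
     \meet_(a <- s) a <= \join_(b <- t) b.

Definition canonical_extension :=
  [/\ complete_lattice C, lattice_embedding, dense & compact].

Definition sigma_ext (f : A -> A) (fs : C -> C) :=
  forall u : C, is_lub (fun x => exists k, closed_el k /\ k <= u /\
                   is_glb (fun y => exists a, k <= e a /\ y = e (f a)) x) (fs u).

Definition pi_ext (f : A -> A) (fp : C -> C) :=
  forall u : C, is_glb (fun x => exists o, open_el o /\ u <= o /\
                   is_lub (fun y => exists a, e a <= o /\ y = e (f a)) x) (fp u).
End CanExt.

Definition compl_join_generating {d} {C : porderType d} (J : C -> Prop) :=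
  forall u : C, is_lub (fun k => J k /\ k <= u) u.
Definition compl_meet_generating {d} {C : porderType d} (M : C -> Prop) :=
  forall u : C, is_glb (fun o => M o /\ u <= o) u.

(* terms: proposition variables, nominals, conominals, lattice connectives,
   diamond, box, the left adjoint of box (Diab) and the right adjoint of diamond (Black) *)
Inductive term :=
  | TVar of nat | TNom of nat | TConom of nat | TTop | TBot
  | TMeet of term & term | TJoin of term & term
  | TDia of term | TBox of term | TDiab of term | TBlack of term.

Inductive ineq := Ineq of term & term.

Fixpoint nom_occurs (k : nat) (t : term) : bool :=
  match t with
  | TNom i => i == k
  | TVar _ | TConom _ | TTop | TBot => false
  | TMeet s u | TJoin s u => nom_occurs k s || nom_occurs k u
  | TDia s | TBox s | TDiab s | TBlack s => nom_occurs k s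
  end.

Definition nom_occurs_ineq k (phi : ineq) :=
  let: Ineq s t := phi in nom_occurs k s || nom_occurs k t.

Definition nom_occurs_seq k (G : seq ineq) := has (nom_occurs_ineq k) G.

Section Semantics.
Context {d : Order.disp_t} {C : tbLatticeType d}
        (dias boxp diab black : C -> C).

Record assignment := Assignment {
  a_var : nat -> C; a_nom : nat -> C; a_conom : nat -> C }.

Fixpoint interp (v : assignment) (t : term) : C :=
  match t with
  | TVar p => a_var v p
  | TNom i => a_nom v i
  | TConom i => a_conom v i
  | TTop => \top
  | TBot => \bot
  | TMeet s u => interp v s `&` interp v u
  | TJoin s u => interp v s `|` interp v u
  | TDia s => dias (interp v s)
  | TBox s => boxp (interp v s)
  | TDiab s => diab (interp v s)
  | TBlack s => black (interp v s)
  end.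

Definition holds (v : assignment) (phi : ineq) : Prop :=
  let: Ineq s t := phi in interp v s <= interp v t.

Definition seq_valid (J M : C -> Prop) (G D : seq ineq) : Prop :=
  forall v : assignment, (forall i, J (a_nom v i)) -> (forall i, M (a_conom v i)) ->
    (forall phi, Stdlib.Lists.List.In phi G -> holds v phi) ->
    exists psi, Stdlib.Lists.List.In psi D /\ holds v psi.
End Semantics.

(* Everything rests on the inequality ◇ᵇ◇u ≤ ◇◇ᵇu, valid for every u of the
   canonical extension. By adjunction it amounts to ◇u ≤ □◇◇ᵇu; since ◇ is the
   σ-extension it suffices to check this on closed elements k, and ◇ᵇ maps
   closed elements to closed elements (compactness). For a closed k, ◇k is the
   meet of the e(◇a) with k ≤ e a, and ◇ᵇk ≤ e b means k ≤ e(□b), which gives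
   ◇ᵇ◇k ≤ e(◇□b) ≤ e(□◇b) = □(e b) by the axiom on A.
   Soundness of the rule then follows: from h ≤ ◇j we get
   ◇ᵇh ≤ ◇ᵇ◇j ≤ ◇◇ᵇj, and ◇◇ᵇj is the join of the ◇k over the nominals
   k ≤ ◇ᵇj, each of which is below m by the premise instantiated at the fresh
   nominal k. *)
From HB Require Import structures.
From Stdlib Require Import Classical.
From mathcomp Require Import all_boot all_order.
Import Order.Theory.
Local Open Scope order_scope.

Lemma complete_lattice_glb {d} {C : porderType d} :
  complete_lattice C -> forall S : C -> Prop, exists x, is_glb S x.
Proof.
move=> cplC S; have [x [ubx lstx]] := cplC (is_lb S); exists x; split.
  by move=> y Sy; apply: lstx => z; apply.
by move=> z; apply: ubx.
Qed.

Section Adjunction.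
Context {d : Order.disp_t} {C : porderType d} {f g : C -> C}.
Hypothesis fg : forall u v : C, f u <= v <-> u <= g v.

Lemma ladj_mono : {homo f : u v / u <= v}.
Proof. by move=> u v uv; apply/fg; apply: le_trans uv _; apply/fg. Qed.

Lemma ladj_le_of_join_generating {J : C -> Prop} : compl_join_generating J ->
  forall u x, (forall k, J k -> k <= u -> f k <= x) -> f u <= x.
Proof. by move=> Jgen u x fkx; apply/fg; apply: (Jgen u).2 => k [Jk ku]; apply/fg/fkx. Qed.

End Adjunction.

Lemma box_mono {dA} {A : tbLatticeType dA} {dia box : A -> A} :
  is_L_algebra dia box -> {homo box : a b / a <= b}.
Proof. by case=> _ _ _ boxI a b /meet_idPl ab; apply/meet_idPl; rewrite -boxI ab. Qed.

Lemma sigma_ext_mono {dA} {A : tbLatticeType dA} {dC} {C : tbLatticeType dC}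
    {e : A -> C} {f : A -> A} {fs : C -> C} :
  sigma_ext e f fs -> {homo fs : u v / u <= v}.
Proof.
move=> sig u v uv; apply: (sig u).2 => x [k [kc [ku kx]]].
by apply: (sig v).1; exists k; do !split => //; apply: le_trans ku uv.
Qed.

Section LatticeEmbedding.
Context {dA : Order.disp_t} {A : tbLatticeType dA}
        {dC : Order.disp_t} {C : tbLatticeType dC} {e : A -> C}.

Lemma open_el_emb a : open_el e (e a).
Proof. by exists (eq^~ a); split=> [y [b [-> ->]] // | z za]; apply: za; exists a. Qed.

Hypothesis emb : lattice_embedding e.

Lemma emb_le a b : (e a <= e b) = (a <= b).
Proof.
have [inj _ _ eI _] := emb.
by apply/meet_idPl/meet_idPl => [eab | ab]; [apply: inj; rewrite eI | rewrite -eI ab].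
Qed.

Lemma glb_img_le_emb_big_meet (S : A -> Prop) (k : C) (s : seq A) :
  is_glb (img e S) k -> (forall a, a \in s -> S a) -> k <= e (\meet_(a <- s) a).
Proof.
have [_ _ eT eI _] := emb; move=> [klb _]; elim: s => [|a s IHs] Ss.
  by rewrite big_nil eT lex1.
rewrite big_cons eI lexI; apply/andP; split.
  by apply: klb; exists a; split=> //; apply: Ss; rewrite mem_head.
by apply: IHs => b bs; apply: Ss; rewrite in_cons bs orbT.
Qed.

Context {dia box : A -> A}.
Hypothesis L : is_L_algebra dia box.

Lemma big_join_box_le_box (o : C) (t : seq A) :
  (forall b, b \in t -> exists c, e c <= o /\ b = box c) ->
  exists c, e c <= o /\ \join_(b <- t) b <= box c.
Proof.
have [_ e0 _ _ eU] := emb; elim: t => [|b t IHt] tbox.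
  by exists \bot; rewrite e0 big_nil !le0x.
have [c1 [c1o ->]] := tbox b (mem_head _ _).
have [c2 [c2o tc2]] : exists c, e c <= o /\ \join_(b <- t) b <= box c.
  by apply: IHt => x xt; apply: tbox; rewrite in_cons xt orbT.
exists (c1 `|` c2); rewrite eU leUx c1o c2o big_cons leUx; split=> //.
by rewrite (box_mono L _ _ (leUl c1 c2)) (le_trans tc2) // (box_mono L _ _ (leUr c2 c1)).
Qed.

End LatticeEmbedding.

Section CanonicalExtension.
Context {dA : Order.disp_t} {A : tbLatticeType dA} {dia box : A -> A}
        {dC : Order.disp_t} {C : tbLatticeType dC} {e : A -> C}
        {dias boxp diab : C -> C}.
Hypotheses (L : is_L_algebra dia box) (ce : canonical_extension e)
           (sig : sigma_ext e dia dias) (pi : pi_ext e box boxp)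
           (diab_boxp : forall u v : C, diab u <= v <-> u <= boxp v).

Lemma pi_ext_emb a : boxp (e a) = e (box a).
Proof.
have [cplC emb _ _] := ce; apply: le_anti; apply/andP; split.
  have [x [xub xlst]] := cplC (fun y => exists b, e b <= e a /\ y = e (box b)).
  apply: le_trans ((pi (e a)).1 x _) _; first by exists (e a); do !split => //; apply: open_el_emb.
  by apply: xlst => y [b [ba ->]]; rewrite (emb_le emb) (box_mono L) // -(emb_le emb).
by apply: (pi (e a)).2 => x [o [_ [ao [xub _]]]]; apply: xub; exists a.
Qed.

(* ◇ᵇk is the meet of the e c with k ≤ e(□c): an open o above ◇ᵇk gives k ≤ □o,
   and compactness turns this into k ≤ e(□c) for a single c with e c ≤ o. *)
Lemma closed_el_diab k : closed_el e k -> closed_el e (diab k).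
Proof.
have [cplC emb dns cmp] := ce; move=> [S kS].
exists (fun a => k <= e (box a)); split.
  by move=> y [a [ka ->]]; apply/diab_boxp; rewrite pi_ext_emb.
move=> z zlb; apply: (dns (diab k)).2.2 => o [[T oT] ko].
have [y [yub ylst]] := cplC (fun y => exists a, e a <= o /\ y = e (box a)).
have ky : k <= y.
  apply: le_trans ((pi o).1 y _); first exact/diab_boxp.
  by exists o; do !split => //; exists T.
have y_img : is_lub (img e (fun b => exists c, e c <= o /\ b = box c)) y.
  split=> [w [b [[c [co ->]] ->]] | w wub]; first by apply: yub; exists c.
  by apply: ylst => w' [c [co ->]]; apply: wub; exists (box c); split=> //; exists c.
have [s [t [sS [tbox st]]]] := cmp _ _ _ _ kS y_img ky.
have [c [co tc]] := big_join_box_le_box emb L o t tbox.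
apply: le_trans _ co; apply: zlb; exists c; split=> //.
by apply: le_trans (glb_img_le_emb_big_meet emb _ _ _ kS sS) _; rewrite (emb_le emb) (le_trans st).
Qed.

Hypothesis dia_box_le_box_dia : forall a : A, dia (box a) <= box (dia a).

Lemma diab_dias_le_dias_diab u : diab (dias u) <= dias (diab u).
Proof.
have [cplC emb _ _] := ce.
apply/diab_boxp; apply: (sig u).2 => x [k [kc [ku kx]]]; apply/diab_boxp.
apply: le_trans _ (sigma_ext_mono sig _ _ (ladj_mono diab_boxp _ _ ku)).
have [g g_glb] := complete_lattice_glb cplC
  (fun y => exists a, diab k <= e a /\ y = e (dia a)).
apply: le_trans ((sig (diab k)).1 g _); last first.
  by exists (diab k); do !split => //; apply: closed_el_diab.
apply: g_glb.2 => y [b [kb ->]]; apply/diab_boxp; rewrite pi_ext_emb.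
have kbox : k <= e (box b) by rewrite -pi_ext_emb; apply/diab_boxp.
apply: le_trans (kx.1 _ (ex_intro _ (box b) (conj kbox erefl))) _.
by rewrite (emb_le emb).
Qed.

End CanonicalExtension.

Section FreshNominal.
Context {d : Order.disp_t} {C : tbLatticeType d} (dias boxp diab black : C -> C).

Definition upd_nom (v : @assignment d C) (k : nat) (kv : C) :=
  Assignment (a_var v) (fun i => if i == k then kv else a_nom v i) (a_conom v).

Lemma interp_upd_nom v k kv t : ~~ nom_occurs k t ->
  interp dias boxp diab black (upd_nom v k kv) t = interp dias boxp diab black v t.
Proof.
elim: t => //= [i /negbTE -> // | s IHs t IHt | s IHs t IHt | s IH | s IH | s IH | s IH].
1,2: by rewrite negb_or => /andP[/IHs -> /IHt ->].
all: by move/IH ->.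
Qed.

Lemma holds_upd_nom v k kv phi : ~~ nom_occurs_ineq k phi ->
  holds dias boxp diab black (upd_nom v k kv) phi <-> holds dias boxp diab black v phi.
Proof. by case: phi => s t; rewrite /= negb_or => /andP[ks kt]; rewrite !interp_upd_nom. Qed.

Lemma nom_occurs_seq_In k G phi :
  ~~ nom_occurs_seq k G -> List.In phi G -> ~~ nom_occurs_ineq k phi.
Proof.
elim: G => //= psi G IHG; rewrite /nom_occurs_seq /= negb_or => /andP[kpsi kG].
by case=> [<- | /(IHG kG)].
Qed.

Lemma seq_valid_at_fresh_nominal (J M : C -> Prop) (G D : seq ineq) j k m v kv :
  k != j -> ~~ nom_occurs_seq k G -> ~~ nom_occurs_seq k D ->
  seq_valid dias boxp diab black J M
    (G ++ [:: Ineq (TNom k) (TDiab (TNom j))]) (Ineq (TDia (TNom k)) (TConom m) :: D) ->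
  (forall i, J (a_nom v i)) -> (forall i, M (a_conom v i)) ->
  (forall phi, List.In phi G -> holds dias boxp diab black v phi) ->
  ~ (exists psi, List.In psi D /\ holds dias boxp diab black v psi) ->
  J kv -> kv <= diab (a_nom v j) -> dias kv <= a_conom v m.
Proof.
move=> kj kG kD prem vJ vM vG vD Jkv kvj.
have [|//|phi |psi [[<- | Dpsi] vpsi]] := prem (upd_nom v k kv).
- by move=> i /=; case: ifP.
- move=> /(List.in_app_or G) [Gphi | [<- | []]]; last by rewrite /= eqxx eq_sym (negbTE kj).
  by apply/holds_upd_nom; [apply: nom_occurs_seq_In kG Gphi | apply: vG].
- by move: vpsi; rewrite /= eqxx.
- by case: vD; exists psi; split=> //; apply/(holds_upd_nom v k kv) => //;
    apply: nom_occurs_seq_In kD Dpsi.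
Qed.

End FreshNominal.

Theorem mainTheorem3
  {dA : Order.disp_t} (A : tbLatticeType dA) (dia box : A -> A)
  {dC : Order.disp_t} (C : tbLatticeType dC) (e : A -> C)
  (dias boxp diab black : C -> C) (J M : C -> Prop) :
  is_L_algebra dia box ->
  canonical_extension e ->
  sigma_ext e dia dias ->
  pi_ext e box boxp ->
  (forall u v : C, diab u <= v <-> u <= boxp v) ->
  (forall u v : C, dias u <= v <-> u <= black v) ->
  compl_join_generating J ->
  compl_meet_generating M ->
  (forall a : A, dia (box a) <= box (dia a)) ->
  forall (G D : seq ineq) (j h k m : nat),
    k != j -> k != h ->
    ~~ nom_occurs_seq k G -> ~~ nom_occurs_seq k D ->
    seq_valid dias boxp diab black J M
      (G ++ [:: Ineq (TNom k) (TDiab (TNom j))])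
      (Ineq (TDia (TNom k)) (TConom m) :: D) ->
    seq_valid dias boxp diab black J M
      (G ++ [:: Ineq (TNom h) (TDia (TNom j))])
      (Ineq (TDiab (TNom h)) (TConom m) :: D).
Proof.
move=> L ce sig pi diab_boxp dias_black Jgen _ ax G D j h k m kj _ kG kD prem v vJ vM vGh.
have [[psi [Dpsi vpsi]] | vD] :=
  classic (exists psi, List.In psi D /\ holds dias boxp diab black v psi).
  by exists psi; split; [right |].
exists (Ineq (TDiab (TNom h)) (TConom m)); split; first by left.
have vG phi : List.In phi G -> holds dias boxp diab black v phi.
  by move=> Gphi; apply: vGh; apply: List.in_or_app; left.
have hj : holds dias boxp diab black v (Ineq (TNom h) (TDia (TNom j))).
  by apply: vGh; apply: List.in_or_app; right; left.
have dias_diab_j : dias (diab (a_nom v j)) <= a_conom v m.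
  apply: (ladj_le_of_join_generating dias_black Jgen) => kv Jkv kvj.
  exact: seq_valid_at_fresh_nominal kj kG kD prem vJ vM vG vD Jkv kvj.
apply: le_trans dias_diab_j; apply: le_trans (diab_dias_le_dias_diab L ce sig pi diab_boxp ax _).
exact: ladj_mono diab_boxp _ _ hj.
Qed.
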